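(* If $L\subseteq\Sigma^\omega$ is RPBA-recognizable, then there are finitely many Parikh-recognizable languages $U_1,\dots,U_n\subseteq\Sigma^*$ and regular languages $V_1,\dots,V_n\subseteq\Sigma^*$ with $L=\bigcup_{i=1}^nU_iV_i^\omega$.
   Context: For $V\subseteq\Sigma^*$, $V^\omega=\{w_1w_2\cdots\mid w_i\in V\setminus\{\varepsilon\}\}$. A semi-linear set in $\mathbb{N}^d$ is a finite union of sets $\{b_0+\sum_{j=1}^\ell b_jz_j\mid z_j\in\mathbb{N}\}$ with $b_j\in\mathbb{N}^d$. A Parikh automaton (PA) of dimension $d$ is $(Q,\Sigma,q_0,\Delta,F,C)$ with finite $Q$, $q_0\in Q$, $F\subseteq Q$, finite $\Delta\subseteq Q\times\Sigma\times\mathbb{N}^d\times Q$, semi-linear $C\subseteq\mathbb{N}^d$; it accepts a finite word $x_1\cdots x_n$ if there is a run $r_i=(p_{i-1},x_i,\mathbf{v}_i,p_i)\in\Delta$, $p_0=q_0$, with $p_n\in F$ and $\sum_i\mathbf{v}_i\in C$; Parikh-recognizable languages are those accepted by PA. A reachability Parikh–Büchi automaton (RPBA) is a PA read on infinite words: a run $r_1r_2\cdots$ ($r_i=(p_{i-1},\alpha_i,\mathbf{v}_i,p_i)\in\Delta$, $p_0=q_0$) is accepting if there is $i\ge1$ with $p_i\in F$ and $\sum_{k\le i}\mathbf{v}_k\in C$, and there are infinitely many $j$ with $p_j\in F$. $L$ is RPBA-recognizable if it is the set of infinite words with an accepting run of some RPBA. *)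

From Stdlib Require List.
From mathcomp Require Import all_boot.
Set Implicit Arguments. Unset Strict Implicit. Unset Printing Implicit Defensive.

Definition vec (d : nat) := 'I_d -> nat.

Record linset (d : nat) := Linset { lbase : vec d; lperiods : seq (vec d) }.

Definition in_linset d (l : linset d) (v : vec d) : Prop :=
  exists z : nat -> nat, forall k : 'I_d,
    v k = lbase l k + \sum_(j < size (lperiods l)) z j * nth (fun _ => 0) (lperiods l) j k.

Definition semilinear (d : nat) := seq (linset d).

Definition in_semilinear d (C : semilinear d) (v : vec d) : Prop :=
  exists l, List.In l C /\ in_linset l v.

Record PA (Sigma : finType) (d : nat) := MkPA {
  pa_Q : finType;
  pa_q0 : pa_Q;
  pa_Delta : seq (pa_Q * Sigma * vec d * pa_Q);
  pa_F : pred pa_Q;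
  pa_C : semilinear d }.
Arguments pa_Q {Sigma d} p.
Arguments pa_q0 {Sigma d} p.
Arguments pa_Delta {Sigma d} p.
Arguments pa_F {Sigma d} p.
Arguments pa_C {Sigma d} p.

Definition vsum d (vs : nat -> vec d) (n : nat) : vec d :=
  fun k => \sum_(i < n) vs i k.

(* Acceptance of a finite word x_1 ... x_n (0-indexed here): states p 0 .. p n,
   transition i is (p i, x_i, vs i, p (i+1)). *)
Definition PA_accepts Sigma d (A : PA Sigma d) (w : seq Sigma) : Prop :=
  exists (p : nat -> pa_Q A) (vs : nat -> vec d),
    p 0 = pa_q0 A /\
    (forall i x, onth w i = Some x -> List.In (p i, x, vs i, p i.+1) (pa_Delta A)) /\
    pa_F A (p (size w)) /\
    in_semilinear (pa_C A) (vsum vs (size w)).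

Definition Parikh_recognizable (Sigma : finType) (U : seq Sigma -> Prop) : Prop :=
  exists d (A : PA Sigma d), forall w, U w <-> PA_accepts A w.

(* Transition r_{i+1} = (p i, alpha i, vs i, p (i+1)); sum_{k <= i} v_k of the paper
   is vsum vs i here (sum of the first i transitions), reached in state p i. *)
Definition RPBA_accepts Sigma d (A : PA Sigma d) (alpha : nat -> Sigma) : Prop :=
  exists (p : nat -> pa_Q A) (vs : nat -> vec d),
    p 0 = pa_q0 A /\
    (forall i, List.In (p i, alpha i, vs i, p i.+1) (pa_Delta A)) /\
    (exists i, 1 <= i /\ pa_F A (p i) /\ in_semilinear (pa_C A) (vsum vs i)) /\
    (forall m, exists j, m < j /\ pa_F A (p j)).

Definition RPBA_recognizable (Sigma : finType) (L : (nat -> Sigma) -> Prop) : Prop :=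
  exists d (A : PA Sigma d), forall alpha, L alpha <-> RPBA_accepts A alpha.

Record DFA (Sigma : finType) := MkDFA {
  dfa_Q : finType;
  dfa_q0 : dfa_Q;
  dfa_delta : dfa_Q -> Sigma -> dfa_Q;
  dfa_F : pred dfa_Q }.
Arguments dfa_Q {Sigma} d.
Arguments dfa_q0 {Sigma} d.
Arguments dfa_delta {Sigma} d.
Arguments dfa_F {Sigma} d.

Definition DFA_accepts Sigma (A : DFA Sigma) (w : seq Sigma) : bool :=
  dfa_F A (foldl (dfa_delta A) (dfa_q0 A) w).

Definition regular (Sigma : finType) (V : seq Sigma -> Prop) : Prop :=
  exists A : DFA Sigma, forall w, V w <-> DFA_accepts A w.

(* V^omega = { w_1 w_2 ... | w_i in V \ {eps} }:  beta is the infinite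
   concatenation of ws 0, ws 1, ... iff every finite concatenation is a prefix. *)
Definition omega_lang (Sigma : finType) (V : seq Sigma -> Prop) (beta : nat -> Sigma) : Prop :=
  exists ws : nat -> seq Sigma,
    (forall i, V (ws i) /\ ws i <> [::]) /\
    (forall n, let pre := flatten (map ws (iota 0 n)) in
       pre = map beta (iota 0 (size pre))).

Definition concat_lang (Sigma : finType) (U : seq Sigma -> Prop)
    (W : (nat -> Sigma) -> Prop) (alpha : nat -> Sigma) : Prop :=
  exists u beta, U u /\ W beta /\
    (forall k, alpha k = if k < size u then nth (beta 0) u k else beta (k - size u)).

(* An accepting run satisfies the reachability condition at some
   position i and, by the pigeonhole principle, visits one accepting state f
   infinitely often.  Cutting the word at a visit t >= i to f writes it as u beta.
   The word u is accepted by a Parikh automaton that simulates the RPBA, guesses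
   the position i, and ends in f; the suffix beta splits at the later visits to f
   into nonempty words leading from f back to f, a regular language.  Conversely,
   such a decomposition glues back into an accepting run.  Taking the union over
   the states f gives the theorem. *)

From mathcomp Require Import all_boot zify.
From Stdlib Require Import ClassicalEpsilon FunctionalExtensionality.
Set Implicit Arguments. Unset Strict Implicit. Unset Printing Implicit Defensive.

Definition inf_often (P : nat -> Prop) : Prop := forall m, exists j, m < j /\ P j.

Lemma inf_often_pigeonhole (T : finType) (P : pred T) (p : nat -> T) :
  inf_often (fun j => P (p j)) -> exists x, P x /\ inf_often (fun j => p j = x).
Proof.
move=> infP; apply: NNPP => none.
have bound x : exists m, forall j, m < j -> p j = x -> ~ P x.
  apply: NNPP => unbounded; apply: none; exists x; split.
    by apply: NNPP => nPx; apply: unbounded; exists 0.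
  move=> m; apply: NNPP => nj; apply: unbounded; exists m => j mj pj _.
  by apply: nj; exists j.
have [M M_bound] := ClassicalEpsilon.choice _ bound.
have [j [jM Pj]] := infP (\max_x M x).
exact: (M_bound (p j) j (leq_ltn_trans (leq_bigmax (p j)) jM) erefl Pj).
Qed.

Lemma eq_vsum d (vs vs' : nat -> vec d) n :
  (forall k, k < n -> vs k = vs' k) -> vsum vs n = vsum vs' n.
Proof.
by move=> E; apply: functional_extensionality => c; apply: eq_bigr => k _; rewrite E.
Qed.

Lemma vsum_zero_tail d (vs : nat -> vec d) i n : i <= n ->
  (forall k, i <= k < n -> vs k = (fun _ => 0)) -> vsum vs n = vsum vs i.
Proof.
move=> le_in vs0; apply: functional_extensionality => c.
rewrite /vsum -(subnKC le_in) big_split_ord /= [X in _ + X]big1 ?addn0 // => k _.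
by rewrite vs0 // leq_addr /= -ltn_subRL.
Qed.

Lemma onth_map_iota (T : Type) (al : nat -> T) t k x :
  onth (map al (iota 0 t)) k = Some x <-> k < t /\ x = al k.
Proof.
have E : k < t -> onth (map al (iota 0 t)) k = Some (al k).
  by move=> kt; rewrite onthE -map_comp (nth_map 0) ?size_iota //= nth_iota.
split=> [Ek | [kt ->]]; last exact: E.
have := onthTE (map al (iota 0 t)) k; rewrite Ek size_map size_iota => /esym kt.
by move: Ek; rewrite E // => -[].
Qed.

Lemma concat_langP (Sigma : finType) (U : seq Sigma -> Prop)
    (W : (nat -> Sigma) -> Prop) al :
  concat_lang U W al <-> exists t, U (map al (iota 0 t)) /\ W (fun m => al (t + m)).
Proof.
split=> [[u [beta [Uu [Wbeta al_eq]]]] | [t [Ut Wt]]].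
- exists (size u); split.
    suff -> : map al (iota 0 (size u)) = u by [].
    apply: (@eq_from_nth _ (beta 0)); rewrite size_map size_iota // => k ku.
    by rewrite (nth_map 0) ?size_iota // nth_iota // al_eq ku.
  suff -> : (fun m => al (size u + m)) = beta by [].
  by apply: functional_extensionality => m; rewrite al_eq ltnNge leq_addr addKn.
- exists (map al (iota 0 t)), (fun m => al (t + m)); do 2!split=> //.
  move=> k; rewrite size_map size_iota; case: ltnP => kt.
    by rewrite (nth_map 0) ?size_iota // nth_iota.
  by rewrite subnKC.
Qed.

Lemma flatten_segments (T : Type) (beta : nat -> T) (J : nat -> nat) n :
  J 0 = 0 -> (forall k, J k <= J k.+1) ->
  flatten [seq map beta (iota (J k) (J k.+1 - J k)) | k <- iota 0 n] =
  map beta (iota 0 (J n)).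
Proof.
move=> J0 Jmono; elim: n => [|n IH]; first by rewrite J0.
rewrite -[in iota 0 n.+1]addn1 iotaD map_cat flatten_cat IH /= cats0.
by rewrite -map_cat -{2}[J n]add0n -iotaD subnKC.
Qed.

Lemma omega_langP (Sigma : finType) (V : seq Sigma -> Prop) beta :
  omega_lang V beta <-> exists J : nat -> nat,
    [/\ J 0 = 0, forall k, J k < J k.+1
      & forall k, V (map beta (iota (J k) (J k.+1 - J k)))].
Proof.
split=> [[ws [Vws pre]] | [J [J0 J_lt VJ]]].
- pose J k := size (flatten (map ws (iota 0 k))).
  have flattenS k : flatten (map ws (iota 0 k.+1)) = flatten (map ws (iota 0 k)) ++ ws k.
    by rewrite -addn1 iotaD map_cat flatten_cat /= cats0.
  have JS k : J k.+1 = J k + size (ws k) by rewrite /J flattenS size_cat.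
  have ws_segment k : ws k = map beta (iota (J k) (size (ws k))).
    have := pre k.+1; cbv zeta; rewrite flattenS size_cat iotaD map_cat add0n.
    move/eqP; rewrite eqseq_cat; last by rewrite size_map size_iota.
    by case/andP=> _ /eqP.
  exists J; split=> // k.
    by rewrite JS -addn1 leq_add2l lt0n size_eq0; case: (Vws k) => _ /eqP.
  by rewrite JS addKn -ws_segment; case: (Vws k).
- exists (fun k => map beta (iota (J k) (J k.+1 - J k))); split.
    move=> k; split=> //; apply/eqP; rewrite -size_eq0 size_map size_iota.
    by rewrite -lt0n subn_gt0.
  by move=> n /=; rewrite flatten_segments // ?size_map ?size_iota // => k; apply: ltnW.
Qed.

Section Blocks.
Variable J : nat -> nat.
Hypotheses (J0 : J 0 = 0) (J_lt : forall k, J k < J k.+1).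

Fixpoint block (m : nat) : nat :=
  if m is m'.+1 then (if m < J (block m').+1 then block m' else (block m').+1) else 0.

Lemma blockP m : J (block m) <= m < J (block m).+1.
Proof.
elim: m => [|m IH] /=; first by have := J_lt 0; rewrite J0.
have := J_lt (block m).+1; case: ifP => H; lia.
Qed.

Lemma block_J k : block (J k) = k.
Proof.
have := blockP (J k); case: (ltngtP (block (J k)) k) => // [lt_bk | lt_kb].
- have := homo_leq leqnn leq_trans (fun i => ltnW (J_lt i)) lt_bk; lia.
- have := homo_ltn ltn_trans J_lt lt_kb; lia.
Qed.

End Blocks.

Section Loops.
Variables (Sigma : finType) (S : Type) (step : S -> Sigma -> S -> Prop).

Fixpoint reach (q : S) (w : seq Sigma) (q' : S) : Prop :=
  if w is a :: w' then exists m, step q a m /\ reach m w' q' else q = q'.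

Lemma reach_segmentP (beta : nat -> Sigma) a n q q' :
  reach q (map beta (iota a n)) q' <-> exists rho : nat -> S,
    [/\ rho 0 = q, rho n = q' & forall j, j < n -> step (rho j) (beta (a + j)) (rho j.+1)].
Proof.
elim: n a q => [|n IH] a q /=.
  by split=> [<-|[rho [<- <- _]]] //; exists (fun _ => q).
split=> [[m [qm /IH [rho [rho0 rhon rho_step]]]] | [rho [rho0 rhon rho_step]]].
- exists (fun j => if j is j'.+1 then rho j' else q); split=> //.
  case=> [_|j jn] /=; first by rewrite addn0 rho0.
  by rewrite -addSnnS; apply: rho_step.
- exists (rho 1); split; first by rewrite -rho0 -[a]addn0; apply: rho_step.
  apply/IH; exists (fun j => rho j.+1); split=> // j jn.
  by rewrite addSnnS; apply: rho_step.
Qed.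

Lemma omega_loopsP (V : seq Sigma -> Prop) q : (forall w, V w <-> reach q w q) ->
  forall beta, omega_lang V beta <-> exists rho : nat -> S,
    [/\ rho 0 = q, forall m, step (rho m) (beta m) (rho m.+1) & inf_often (fun j => rho j = q)].
Proof.
move=> VP beta; rewrite omega_langP; split=> [[J [J0 J_lt VJ]] | [rho [rho0 rho_step rho_rec]]].
- have loops k := (reach_segmentP _ _ _ _ _).1 ((VP _).1 (VJ k)).
  have [R R_loop] := ClassicalEpsilon.choice _ loops.
  exists (fun m => R (block J m) (m - J (block J m))); split.
  + by rewrite /= J0; case: (R_loop 0).
  + move=> m /=; have := blockP J0 J_lt m; set b := block J m => bm.
    case: (R_loop b) => _ Rend Rstep; case: ifP => [lt_mb | ge_mb].
      by have := Rstep (m - J b) ltac:(lia); rewrite subnKC ?subSn //; case/andP: bm.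
    case: (R_loop b.+1) => Rstart _ _; have -> : m.+1 - J b.+1 = 0 by lia.
    rewrite Rstart -Rend (_ : J b.+1 - J b = (m - J b).+1); last by lia.
    by have := Rstep (m - J b) ltac:(lia); rewrite subnKC //; case/andP: bm.
  + move=> m; exists (J (block J m).+1); split; first by have := blockP J0 J_lt m; lia.
    by rewrite block_J // subnn; case: (R_loop (block J m).+1).
- have [g g_next] := ClassicalEpsilon.choice _ rho_rec.
  pose J k := iter k g 0.
  have J_lt k : J k < J k.+1 by case: (g_next (J k)).
  have rhoJ k : rho (J k) = q by case: k => [|k] //; case: (g_next (J k)).
  exists J; split=> // k; apply/VP/reach_segmentP.
  exists (fun j => rho (J k + j)); split; rewrite ?addn0 ?subnKC ?rhoJ ?(ltnW (J_lt k)) //.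
  by move=> j _; rewrite addnS.
Qed.

End Loops.

Section Automaton.
Variables (Sigma : finType) (d : nat) (A : PA Sigma d).
Local Notation Q := (pa_Q A).
Local Notation Delta := (pa_Delta A).

Definition step (q : Q) (a : Sigma) (q' : Q) : Prop :=
  exists v, List.In (q, a, v, q') Delta.

Definition stepb (q : Q) (a : Sigma) (q' : Q) : bool :=
  List.existsb (fun t : Q * Sigma * vec d * Q =>
    [&& t.1.1.1 == q, t.1.1.2 == a & t.2 == q']) Delta.

Lemma stepP q a q' : reflect (step q a q') (stepb q a q').
Proof.
apply: (iffP idP) => [/List.existsb_exists [[[[p c] v] p'] [tr]] | [v tr]].
  by case/and3P=> /eqP/= Ep /eqP/= Ec /eqP/= Ep'; exists v; rewrite -Ep -Ec -Ep'.
by apply/List.existsb_exists; exists (q, a, v, q'); rewrite !eqxx.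
Qed.

Definition subset_delta (X : {set Q}) (a : Sigma) : {set Q} :=
  [set q' | [exists q in X, stepb q a q']].

Definition loop_dfa (f : Q) : DFA Sigma := MkDFA [set f] subset_delta (fun X => f \in X).

Lemma foldl_subset_delta X w q' :
  q' \in foldl subset_delta X w <-> exists2 q, q \in X & reach step q w q'.
Proof.
elim: w X => [|a w IH] X /=; first by split=> [q'X | [q qX <-]] //; exists q'.
rewrite IH; split=> [[m] | [q qX [m [qm mq']]]].
  by rewrite inE => /exists_inP [q qX /stepP qm] mq'; exists q => //; exists m.
by exists m => //; rewrite inE; apply/exists_inP; exists q => //; apply/stepP.
Qed.

Lemma loop_dfa_accepts f w : DFA_accepts (loop_dfa f) w <-> reach step f w f.
Proof.
rewrite /DFA_accepts /= foldl_subset_delta.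
by split=> [[q /set1P ->] | ff] //; exists f; rewrite ?set11.
Qed.

(* The flag records whether the position at which the reachability condition
   is checked has been passed; from then on only zero vectors are added, so
   the final sum is the sum at that position. *)
Definition flagged_trans (t : Q * Sigma * vec d * Q) :
    seq ((Q * bool) * Sigma * vec d * (Q * bool)) :=
  let: (p, a, v, p') := t in
  let stay b u := ((p, b), a, u, (p', b)) in
  if pa_F A p' then [:: stay false v; stay true (fun _ => 0); ((p, false), a, v, (p', true))]
  else [:: stay false v; stay true (fun _ => 0)].

Definition prefix_pa (f : Q) : PA Sigma d :=
  MkPA (pa_q0 A, false) (List.flat_map flagged_trans Delta)
    (fun s : Q * bool => [&& s.1 == f, s.2 & pa_F A f]) (pa_C A).

Lemma flagged_trans_inv s a v s' :
  List.In (s, a, v, s') (List.flat_map flagged_trans Delta) ->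
  if s.2 then [/\ s'.2, v = (fun _ => 0) & step s.1 a s'.1]
  else List.In (s.1, a, v, s'.1) Delta /\ (s'.2 -> pa_F A s'.1).
Proof.
case/List.in_flat_map => [[[[p b] u] p']] [tr]; rewrite /flagged_trans.
by case: ifP => Fp' /= => [[|[|[|[]]]] | [|[|[]]]] [<- <- <- <-] //=; split=> //; exists u.
Qed.

Lemma flagged_trans_of p a v p' (b b' : bool) : List.In (p, a, v, p') Delta ->
  b ==> b' -> (b' && ~~ b -> pa_F A p') ->
  List.In ((p, b), a, if b then (fun _ => 0) else v, (p', b')) (List.flat_map flagged_trans Delta).
Proof.
move=> tr bb' Fp'; apply/List.in_flat_map; exists (p, a, v, p'); split=> //=.
case: b b' bb' Fp' => [] [] //= _ Fp'.
- by case: ifP => /=; auto.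
- by rewrite Fp' //=; auto.
- by case: ifP => /=; auto.
Qed.

Definition accepting_prefix (f : Q) (al : nat -> Sigma) (t : nat) : Prop :=
  exists (p : nat -> Q) (vs : nat -> vec d) (i : nat),
  [/\ [/\ p 0 = pa_q0 A, p t = f, 0 < i <= t, pa_F A (p i)
        & in_semilinear (pa_C A) (vsum vs i)],
      forall k, k < i -> List.In (p k, al k, vs k, p k.+1) Delta
    & forall k, k < t -> step (p k) (al k) (p k.+1)].

Lemma prefix_pa_sound f al t : PA_accepts (prefix_pa f) (map al (iota 0 t)) ->
  pa_F A f /\ accepting_prefix f al t.
Proof.
rewrite /PA_accepts size_map size_iota.
case=> p [vs [p0 [run [/and3P [/eqP pt pt2 Ff] C]]]]; split=> //.
have tr k : k < t -> List.In (p k, al k, vs k, p k.+1) (List.flat_map flagged_trans Delta).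
  by move=> kt; apply: run; apply/onth_map_iota.
have [i pi2 i_min] := ex_minnP (ex_intro (fun k => (p k).2) t pt2).
have i_pos : 0 < i by case: i pi2 {i_min} => //; rewrite p0.
have it : i <= t by apply: i_min.
have flag k : i <= k <= t -> (p k).2.
  elim: k => [|k IH]; first by rewrite leqn0 => /andP [/eqP i0]; move: i_pos; rewrite i0.
  case: (ltngtP i k.+1) => [lt_ik | // | <- //] /andP [_ kt].
  have := flagged_trans_inv (tr k kt); rewrite IH; last by rewrite -ltnS lt_ik (ltnW kt).
  by case.
have before k : k < i -> ~~ (p k).2.
  by move=> ki; apply/negP => /i_min; rewrite leqNgt ki.
exists (fun k => (p k).1), vs, i; split.
- split; rewrite ?p0 ?pt ?i_pos //.
  + have := flagged_trans_inv (tr i.-1 ltac:(lia)).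
    by rewrite prednK // (negbTE (before i.-1 ltac:(lia))) => -[_ /(_ pi2)].
  + rewrite -(@vsum_zero_tail _ _ i t) // => k /andP [ik kt].
    by have := flagged_trans_inv (tr k kt); rewrite flag ?ik ?(ltnW kt) // => -[].
- move=> k ki; have := flagged_trans_inv (tr k ltac:(lia)).
  by rewrite (negbTE (before k ki)) => -[].
- move=> k kt; have := flagged_trans_inv (tr k kt).
  by case: (p k).2 => [[] | [tr' _]] //; exists (vs k).
Qed.

Lemma prefix_pa_complete f al t : pa_F A f -> accepting_prefix f al t ->
  PA_accepts (prefix_pa f) (map al (iota 0 t)).
Proof.
move=> Ff [p [vs [i [[p0 pt /andP [i0 it] Fi C] run steps]]]].
exists (fun k => (p k, i <= k)), (fun k => if i <= k then (fun _ => 0) else vs k).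
split; first by rewrite p0 leqNgt i0.
split.
  move=> k x /onth_map_iota [kt ->] /=.
  have [v [tr v_vs]] : exists v, List.In (p k, al k, v, p k.+1) Delta /\ (k < i -> v = vs k).
    case: (ltnP k i) => [ki | ik]; first by exists (vs k); split=> //; apply: run.
    by case: (steps k kt) => v tr; exists v.
  case: (ltnP k i) => [ki | ik].
    rewrite -(v_vs ki); apply: (flagged_trans_of (b := false) tr) => //= ik1.
    by have -> : k.+1 = i by lia.
  by rewrite (leqW ik); apply: (flagged_trans_of (b := true) tr).
rewrite size_map size_iota /= pt eqxx Ff it; split=> //.
rewrite (@vsum_zero_tail _ _ i t) // => [|k /andP [ik _]]; last by rewrite ik.
by rewrite (@eq_vsum _ _ vs) // => k ki; rewrite leqNgt ki.
Qed.

Lemma RPBA_acceptsP al : RPBA_accepts A al <-> exists f t,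
  [/\ pa_F A f, accepting_prefix f al t
    & exists rho : nat -> Q, [/\ rho 0 = f, forall m, step (rho m) (al (t + m)) (rho m.+1)
                              & inf_often (fun j => rho j = f)]].
Proof.
split=> [[p [vs [p0 [run [[i [i_pos [Fi C]]] infF]]]]] |
         [f [t [Ff pre [rho [rho0 rho_step rho_rec]]]]]].
- have [f [Ff rec_f]] := inf_often_pigeonhole infF.
  have [t [it pt]] := rec_f i.
  exists f, t; split=> //.
    exists p, vs, i; split; rewrite ?i_pos ?(ltnW it) //.
    by move=> k _; exists (vs k).
  exists (fun m => p (t + m)); split; rewrite ?addn0 //.
    by move=> m; rewrite addnS; exists (vs (t + m)).
  move=> m; have [j [tmj pj]] := rec_f (t + m).
  by exists (j - t); split; rewrite ?subnKC //; lia.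
- case: pre => p [vs [i [[p0 pt /andP [i0 it] Fi C] run steps]]].
  pose P k := if k < t then p k else rho (k - t).
  have P_prefix k : k <= t -> P k = p k.
    by rewrite /P leq_eqVlt => /orP [/eqP -> | ->] //; rewrite ltnn subnn rho0.
  have P_suffix m : P (t + m) = rho m by rewrite /P ltnNge leq_addr addKn.
  have P_step k : step (P k) (al k) (P k.+1).
    case: (ltnP k t) => [kt | tk]; first by rewrite !P_prefix ?(ltnW kt) //; apply: steps.
    by rewrite -(subnKC tk) -addnS !P_suffix.
  have vectors k : exists v, List.In (P k, al k, v, P k.+1) Delta /\ (k < i -> v = vs k).
    case: (ltnP k i) => [ki | ik]; last by case: (P_step k) => v tr; exists v.
    by exists (vs k); rewrite !P_prefix //; [split=> //; apply: run | lia | lia].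
  have [vs' vs'_spec] := ClassicalEpsilon.choice _ vectors.
  exists P, vs'; split; first by rewrite P_prefix.
  split; first by move=> k; case: (vs'_spec k).
  split.
    by exists i; rewrite P_prefix // (@eq_vsum _ _ vs) // => k ki; case: (vs'_spec k) => _ ->.
  move=> m; have [j [mj rhoj]] := rho_rec m.
  by exists (t + j); rewrite P_suffix rhoj; split=> //; lia.
Qed.

Lemma RPBA_accepts_concat al : RPBA_accepts A al <-> exists f,
  concat_lang (PA_accepts (prefix_pa f)) (omega_lang (fun w => DFA_accepts (loop_dfa f) w)) al.
Proof.
split=> [/RPBA_acceptsP [f [t [Ff pre suf]]] | [f /concat_langP [t [pre suf]]]].
- exists f; apply/concat_langP; exists t; split; first exact: prefix_pa_complete.
  exact/(omega_loopsP (loop_dfa_accepts f)).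
- apply/RPBA_acceptsP; exists f, t.
  have [Ff acc] := prefix_pa_sound pre.
  by split=> //; apply/(omega_loopsP (loop_dfa_accepts f)).
Qed.

End Automaton.

Theorem lemma8 (Sigma : finType) (L : (nat -> Sigma) -> Prop) :
  RPBA_recognizable L ->
  exists (n : nat) (U V : 'I_n -> seq Sigma -> Prop),
    (forall i, Parikh_recognizable (U i)) /\
    (forall i, regular (V i)) /\
    (forall alpha, L alpha <-> exists i, concat_lang (U i) (omega_lang (V i)) alpha).
Proof.
case=> d [A LA].
exists #|pa_Q A|, (fun i => PA_accepts (prefix_pa (enum_val i))),
  (fun i w => DFA_accepts (loop_dfa (enum_val i)) w).
split; first by move=> i; exists d, (prefix_pa (enum_val i)).
split; first by move=> i; exists (loop_dfa (enum_val i)).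
move=> al; rewrite LA RPBA_accepts_concat.
split=> [[f acc] | [i acc]]; last by exists (enum_val i).
by exists (enum_rank f); rewrite enum_rankK.
Qed.
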